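(* Let $X$ be a real Banach space and $T:X\rightrightarrows X^*$ maximal monotone. Then $$D\big(\delta_{D(T)}^*\big)\subseteq 0^+\big(\mathrm{cl}_{w*}\mathrm{conv}\,R(T)\big),\qquad D\big(\delta_{R(T)}^*\big)\cap X\subseteq 0^+\big(\mathrm{cl}\,\mathrm{conv}\,D(T)\big),$$ where $\delta_{D(T)}^*:X^*\to\mathbb{R}\cup\{\pm\infty\}$, $\delta_{D(T)}^*(u^* )=\sup_{x\in D(T)}\langle x,u^*\rangle$, and $\delta_{R(T)}^*:X^{**}\to\mathbb{R}\cup\{\pm\infty\}$, $\delta_{R(T)}^*(u^{**})=\sup_{x^*\in R(T)}\langle u^{**},x^*\rangle$.
   Context: $X$ is identified with its canonical image in $X^{**}$. An operator $T:X\rightrightarrows X^*$ is a subset of $X\times X^*$ with domain $D(T)$ (its projection onto $X$) and range $R(T)$ (its projection onto $X^*$); $T$ is monotone if $\langle x-y,x^*-y^*\rangle\geq0$ for all $(x,x^* ),(y,y^* )\in T$, and maximal monotone if it is monotone and not properly contained in another monotone operator. For a function $f$, $D(f)=\{z\;|\;f(z)<\infty\}$. The recession cone of a set $C$ is $0^+C=\{u\;|\;x+\lambda u\in C\ \forall x\in C,\ \forall\lambda\geq0\}$. $\mathrm{cl}$ is norm closure in $X$, $\mathrm{cl}_{w*}$ weak-$*$ closure in $X^*$, $\mathrm{conv}$ convex hull. *)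

From HB Require Import structures.
From mathcomp Require Import all_boot all_order all_algebra.
From mathcomp Require Import all_classical all_reals all_analysis.
Set Implicit Arguments. Unset Strict Implicit. Unset Printing Implicit Defensive.
Import Order.TTheory GRing.Theory Num.Theory.
Import numFieldNormedType.Exports.
Local Open Scope classical_set_scope.
Local Open Scope ring_scope.

Section Defs.
Context {R : realType} {X : normedModType R}.

(* elements of the topological dual X^* : continuous linear functionals,
   represented by their underlying functions X -> R *)
Definition dual_elt (f : X -> R) : Prop :=
  (forall (a : R) (x y : X), f (a *: x + y) = a * f x + f y) /\ continuous f.

(* an operator X ⇉ X^* is a subset of X × X^* *)
Definition is_operator (T : set (X * (X -> R))) : Prop :=
  forall p, T p -> dual_elt p.2.

Definition monotone_op (T : set (X * (X -> R))) : Prop :=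
  forall p q, T p -> T q -> 0 <= p.2 (p.1 - q.1) - q.2 (p.1 - q.1).

Definition maximal_monotone (T : set (X * (X -> R))) : Prop :=
  [/\ is_operator T, monotone_op T &
      forall S, is_operator S -> monotone_op S -> T `<=` S -> S = T].

Definition dom_op (T : set (X * (X -> R))) : set X :=
  [set x | exists f, T (x, f)].
Definition ran_op (T : set (X * (X -> R))) : set (X -> R) :=
  [set f | exists x, T (x, f)].

Definition conv_hull (A : set X) : set X :=
  [set z | exists (n : nat) (w : 'I_n -> R) (a : 'I_n -> X),
     [/\ forall i, 0 <= w i, \sum_(i < n) w i = 1, forall i, A (a i)
       & z = \sum_(i < n) w i *: a i]].

Definition conv_dual (A : set (X -> R)) : set (X -> R) :=
  [set g | exists (n : nat) (w : 'I_n -> R) (a : 'I_n -> X -> R),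
     [/\ forall i, 0 <= w i, \sum_(i < n) w i = 1, forall i, A (a i)
       & g = fun z => \sum_(i < n) w i * a i z]].

(* weak-* closure in X^*: closure for the topology sigma(X^*, X), whose
   basic neighbourhoods of f are {g | |g x_i - f x_i| < e, i < n} *)
Definition wstar_closure (A : set (X -> R)) : set (X -> R) :=
  [set f | dual_elt f /\
     forall (n : nat) (xs : 'I_n -> X) (e : R), 0 < e ->
       exists g, A g /\ forall i, `|g (xs i) - f (xs i)| < e].

Definition norm_closure (A : set X) : set X := closure A.

Definition rec_cone (C : set X) : set X :=
  [set u | forall x, C x -> forall l : R, 0 <= l -> C (x + l *: u)].
Definition rec_cone_dual (C : set (X -> R)) : set (X -> R) :=
  [set u | forall x, C x -> forall l : R, 0 <= l -> C (fun z => x z + l * u z)].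

Definition supp_dom (T : set (X * (X -> R))) (u : X -> R) : \bar R :=
  ereal_sup [set (u x)%:E | x in dom_op T].
(* delta^*_{R(T)} evaluated at the canonical image of u in X^** *)
Definition supp_ran (T : set (X * (X -> R))) (u : X) : \bar R :=
  ereal_sup [set (f u)%:E | f in ran_op T].

End Defs.

From HB Require Import structures.
From mathcomp Require Import all_boot all_order all_algebra.
From mathcomp Require Import all_classical all_reals all_analysis.
From mathcomp Require Import ring lra.
Set Implicit Arguments. Unset Strict Implicit. Unset Printing Implicit Defensive.
Import Order.TTheory GRing.Theory Num.Theory.
Import numFieldNormedType.Exports.
Local Open Scope classical_set_scope.
Local Open Scope ring_scope.

(** The core is a property of a maximal monotone T: if u ∈ X^* is bounded
    above on D(T) and z ∈ X is such that every f ∈ R(T) is bounded above at z,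
    then u(z) <= 0.  Otherwise, fixing (x0, g0) ∈ T, for l large enough the pair
    (x0 + l z, g0 + l u) is monotonically related to every element of T, hence
    belongs to T by maximality, and u(x0 + l z) exceeds the bound on D(T).
    Both inclusions follow by contradiction: if a point of the ray from a point
    of the closed convex hull stayed away from the convex hull, a Hahn-Banach
    functional (obtained by Zorn's lemma) would separate it, and this functional
    together with the direction of the ray would violate the core property.  For
    the weak-* closure the separation takes place in R^n, after evaluating at the
    finitely many points that define a weak-* neighbourhood. *)

Section ScalarFun.
Context {R : realType} {V : lmodType R} (f : V -> R).
Hypothesis Lf : scalar f.

Let lf : {scalar V} := HB.pack f (GRing.isLinear.Build _ _ _ _ f Lf).

Lemma scalar_funD x y : f (x + y) = f x + f y.
Proof. exact: (linearD lf x y). Qed.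

Lemma scalar_funN x : f (- x) = - f x.
Proof. exact: (linearN lf x). Qed.

Lemma scalar_funB x y : f (x - y) = f x - f y.
Proof. exact: (linearB lf x y). Qed.

Lemma scalar_funZ a x : f (a *: x) = a * f x.
Proof. exact: (scalarZ lf a x). Qed.

Lemma scalar_fun_sum n (c : 'I_n -> R) (x : 'I_n -> V) :
  f (\sum_(i < n) c i *: x i) = \sum_(i < n) c i * f (x i).
Proof.
change (lf (\sum_(i < n) c i *: x i) = \sum_(i < n) c i * f (x i)); rewrite linear_sum.
by apply: eq_bigr => i _; exact: (scalarZ lf (c i) (x i)).
Qed.

End ScalarFun.

Section HahnBanach.
Context {R : realType} {V : lmodType R} (p : V -> R).
Hypothesis p_subadd : forall x y, p (x + y) <= p x + p y.
Hypothesis p_posZ : forall (a : R) x, 0 < a -> p (a *: x) = a * p x.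

Record partial_fun := PartialFun { pdom : set V ; pval : V -> R }.

Definition dominated_linear (t : partial_fun) := [/\ pdom t 0,
  forall a x y, pdom t x -> pdom t y -> pdom t (a *: x + y),
  forall a x y, pdom t x -> pdom t y -> pval t (a *: x + y) = a * pval t x + pval t y &
  forall x, pdom t x -> pval t x <= p x].

Definition extends (t s : partial_fun) :=
  pdom t `<=` pdom s /\ forall x, pdom t x -> pval s x = pval t x.

Lemma extends_refl t : extends t t.
Proof. by split. Qed.

Lemma extends_trans r s t : extends r s -> extends s t -> extends r t.
Proof.
move=> [rs_dom rs_val] [st_dom st_val]; split=> [x /rs_dom /st_dom //|x Dx].
by rewrite st_val ?rs_val //; exact: rs_dom.
Qed.

Section DominatedLinear.
Variable t : partial_fun.
Hypothesis Lt : dominated_linear t.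

Lemma dominated_dom0 : pdom t 0.
Proof. by case: Lt. Qed.

Lemma dominated_domZ a x : pdom t x -> pdom t (a *: x).
Proof. by case: Lt => D0 DL _ _ Dx; have := DL a x 0 Dx D0; rewrite addr0. Qed.

Lemma dominated_domD x y : pdom t x -> pdom t y -> pdom t (x + y).
Proof. by case: Lt => _ DL _ _ Dx Dy; have := DL 1 x y Dx Dy; rewrite scale1r. Qed.

Lemma dominated_domN x : pdom t x -> pdom t (- x).
Proof. by rewrite -scaleN1r; exact: dominated_domZ. Qed.

Lemma dominated_valD x y : pdom t x -> pdom t y -> pval t (x + y) = pval t x + pval t y.
Proof. by case: Lt => _ _ L _ Dx Dy; have := L 1 x y Dx Dy; rewrite scale1r mul1r. Qed.

Lemma dominated_val0 : pval t 0 = 0.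
Proof.
have := dominated_valD dominated_dom0 dominated_dom0; rewrite addr0 => h; lra.
Qed.

Lemma dominated_valZ a x : pdom t x -> pval t (a *: x) = a * pval t x.
Proof.
case: Lt => D0 _ L _ Dx.
by have := L a x 0 Dx D0; rewrite addr0 dominated_val0 addr0.
Qed.

Lemma dominated_le x : pdom t x -> pval t x <= p x.
Proof. by case: Lt => _ _ _; apply. Qed.

End DominatedLinear.

Definition extend_dom (t : partial_fun) (x : V) : set V :=
  [set z | exists y s, pdom t y /\ z = y + s *: x].

Definition extend_val (t : partial_fun) (x : V) (c : R) : V -> R := fun z =>
  xget 0 [set v | exists y s, [/\ pdom t y, z = y + s *: x & v = pval t y + s * c]].

Definition extend t x c := PartialFun (extend_dom t x) (extend_val t x c).

Section Extend.
Variables (t : partial_fun) (x : V).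
Hypotheses (Lt : dominated_linear t) (Dx : ~ pdom t x).

Lemma extend_decomp_uniq y s y' s' : pdom t y -> pdom t y' ->
  y + s *: x = y' + s' *: x -> s = s' /\ y = y'.
Proof.
move=> Dy Dy' E.
have ss' : s = s'.
  apply: contrapT => /eqP ss'; apply: Dx.
  have -> : x = (s - s')^-1 *: (y' - y).
    apply: (@scalerI _ _ (s - s')); first by rewrite subr_eq0.
    rewrite scalerA divff ?subr_eq0 // scale1r scalerBl.
    by rewrite -[y'](addrK (s' *: x)) -E [RHS]addrAC [y + _]addrC addrK.
  by apply: dominated_domZ => //; apply: dominated_domD => //; apply: dominated_domN.
by split=> //; subst s'; apply: (addIr (s *: x)).
Qed.

Lemma extend_valE c y s : pdom t y -> extend_val t x c (y + s *: x) = pval t y + s * c.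
Proof.
move=> Dy; apply: xget_unique; first by exists y, s.
by move=> v [y' [s' [Dy' /extend_decomp_uniq [//|//|-> ->] ->]]].
Qed.

Lemma extends_extend c : extends t (extend t x c).
Proof.
split=> [y Dy|y Dy] /=; first by exists y, 0; rewrite scale0r addr0.
by have := extend_valE c 0 Dy; rewrite scale0r addr0 mul0r addr0.
Qed.

Lemma extend_dominated c :
  (forall y, pdom t y -> pval t y - p (y - x) <= c /\ c <= p (y + x) - pval t y) ->
  dominated_linear (extend t x c).
Proof.
move=> hc; split => /=.
- by exists 0, 0; rewrite scale0r addr0; split=> //; exact: dominated_dom0.
- move=> a _ _ [y [s [Dy ->]]] [y' [s' [Dy' ->]]].
  exists (a *: y + y'), (a * s + s'); split; first by case: Lt => _ DL _ _; apply: DL.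
  by rewrite scalerDr scalerDl scalerA addrACA.
- move=> a _ _ [y [s [Dy ->]]] [y' [s' [Dy' ->]]].
  have -> : a *: (y + s *: x) + (y' + s' *: x) = (a *: y + y') + (a * s + s') *: x.
    by rewrite scalerDr scalerDl scalerA addrACA.
  have [_ DL L _] := Lt.
  by rewrite !extend_valE ?L //; [ring | exact: DL].
- move=> _ [y [s [Dy ->]]]; rewrite extend_valE //.
  have [s0|s0|->] := ltrgtP s 0; last first.
  + by rewrite scale0r addr0 mul0r addr0; exact: dominated_le.
  + have [_ /(ler_wpM2l (ltW s0))] := hc _ (dominated_domZ Lt s^-1 Dy).
    have -> : y + s *: x = s *: (s^-1 *: y + x).
      by rewrite scalerDr scalerA divff ?gt_eqF // scale1r.
    rewrite p_posZ // dominated_valZ // mulrBr mulrA divff ?gt_eqF // mul1r; lra.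
  + have ns0 : 0 < - s by rewrite oppr_gt0.
    have [/(ler_wpM2l (ltW ns0)) + _] := hc _ (dominated_domZ Lt (- s)^-1 Dy).
    have -> : y + s *: x = (- s) *: ((- s)^-1 *: y - x).
      by rewrite scalerBr scalerA divff ?gt_eqF // scale1r scaleNr opprK.
    rewrite p_posZ // dominated_valZ // mulrBr mulrA divff ?gt_eqF // mul1r; lra.
Qed.

End Extend.

Section Zorn.
Variable t1 : partial_fun.
Hypothesis Lt1 : dominated_linear t1.

Definition dominated_ext := {t : partial_fun | dominated_linear t /\ extends t1 t}.

Definition ext_rel (s t : dominated_ext) : bool := `[< extends (sval s) (sval t) >].

Section Chain.
Variable A : set dominated_ext.
Hypothesis A_total : total_on A ext_rel.

Definition chain_dom : set V := [set x | exists s, A s /\ pdom (sval s) x].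

Definition chain_val : V -> R := fun x =>
  xget 0 [set v | exists s, [/\ A s, pdom (sval s) x & v = pval (sval s) x]].

Definition chain_fun := PartialFun chain_dom chain_val.

Lemma chain_valE s x : A s -> pdom (sval s) x -> chain_val x = pval (sval s) x.
Proof.
move=> As Dx; apply: xget_unique; first by exists s.
move=> v [s' [As' Dx' ->]].
by have [/asboolP [_ ->]|/asboolP [_ ->]] := A_total As As'.
Qed.

Lemma chain_dom_common x y : chain_dom x -> chain_dom y ->
  exists r, [/\ A r, pdom (sval r) x & pdom (sval r) y].
Proof.
move=> [s [As Dx]] [s' [As' Dy]].
have [/asboolP [ss' _]|/asboolP [s's _]] := A_total As As'.
  by exists s'; split => //; exact: ss'.
by exists s; split => //; exact: s's.
Qed.

Lemma chain_dominated : A !=set0 -> dominated_linear chain_fun.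
Proof.
move=> [s0 As0]; split => /=.
- by exists s0; split => //; case: (svalP s0) => /dominated_dom0.
- move=> a x y /chain_dom_common /[apply] [[r [Ar Dx Dy]]].
  by exists r; split => //; case: (svalP r) => [[_ DL _ _] _]; apply: DL.
- move=> a x y /chain_dom_common /[apply] [[r [Ar Dx Dy]]].
  have [[_ DL L _] _] := svalP r.
  by rewrite !(chain_valE Ar) //; [apply: L | apply: DL].
- move=> x [s [As Dx]]; rewrite (chain_valE As Dx).
  by case: (svalP s) => Ls _; exact: dominated_le.
Qed.

Lemma extends_chain : A !=set0 -> extends t1 chain_fun.
Proof.
move=> [s0 As0]; have [_ [dom1 val1]] := svalP s0; split => /=.
  by move=> x /dom1 Dx; exists s0.
by move=> x Dx; rewrite (chain_valE As0) ?val1 //; exact: dom1.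
Qed.

End Chain.

Lemma ext_chain_ub (A : set dominated_ext) : total_on A ext_rel ->
  exists t, forall s, A s -> ext_rel s t.
Proof.
move=> A_total; have [->|/set0P A0] := eqVneq A set0.
  by exists (exist _ t1 (conj Lt1 (extends_refl t1))).
exists (exist _ (chain_fun A) (conj (chain_dominated A_total A0) (extends_chain A_total A0))).
move=> s As; apply/asboolP; split => [x Dx|x Dx] /=; first by exists s.
by rewrite (chain_valE A_total As).
Qed.

(* A maximal extension is total: otherwise it extends by one dimension
   with c := sup_y (pval t y - p (y - x)). *)
Lemma total_dominated_extension :
  exists t, [/\ dominated_linear t, extends t1 t & forall x, pdom t x].
Proof.
have [[t [Lt t1t]] /= tmax] := @ZL_preorder dominated_ext
  (exist _ t1 (conj Lt1 (extends_refl t1))) ext_rel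
  (fun t => asboolT (extends_refl _))
  (fun r s t rs st => asboolT (extends_trans (asboolW rs) (asboolW st)))
  ext_chain_ub.
exists t; split => // x; apply: contrapT => Dx.
pose S := [set pval t y - p (y - x) | y in pdom t].
have S_ub y : pdom t y -> ubound S (p (y + x) - pval t y).
  move=> Dy _ [y' Dy' <-].
  have := p_subadd (y' - x) (y + x); rewrite addrACA addNr addr0.
  have := dominated_le Lt (dominated_domD Lt Dy' Dy).
  rewrite dominated_valD //; lra.
have S_sup : has_sup S.
  split; first by exists (pval t 0 - p (0 - x)), 0 => //; exact: dominated_dom0.
  by exists (p (0 + x) - pval t 0); apply: S_ub; exact: dominated_dom0.
have c_adm y : pdom t y -> pval t y - p (y - x) <= sup S /\ sup S <= p (y + x) - pval t y.
  move=> Dy; split; first by apply: sup_upper_bound => //; exists y.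
  by apply: ge_sup; [case: S_sup | apply: S_ub].
have te := extends_extend Lt Dx (sup S).
have [/= Dext _] := asboolW (tmax (exist _ (extend t x (sup S))
  (conj (extend_dominated Lt Dx c_adm) (extends_trans t1t te))) (asboolT te)).
apply: Dx; apply: Dext; exists 0, 1; rewrite scale1r add0r.
by split=> //; exact: dominated_dom0.
Qed.

End Zorn.

Theorem hahn_banach_scalar (v0 : V) : (forall x, 0 <= p x) -> 1 <= p v0 ->
  exists F : V -> R, [/\ scalar F, forall x, F x <= p x & F v0 = 1].
Proof.
move=> p_ge0 p_v0.
pose t0 := PartialFun [set 0] (fun _ => 0).
have Lt0 : dominated_linear t0.
  split=> //= [a x y -> ->|a x y _ _]; first by rewrite scaler0 addr0.
  by rewrite mulr0 addr0.
have p0 : p 0 = 0.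
  by have := p_posZ 0 (ltr0Sn _ 1); rewrite scaler0 => h; lra.
have Dv0 : ~ pdom t0 v0 by move=> /= v00; move: p_v0; rewrite v00 p0 ler10.
have c_adm y : pdom t0 y -> pval t0 y - p (y - v0) <= 1 /\ 1 <= p (y + v0) - pval t0 y.
  by move=> /= ->; rewrite !(add0r, sub0r, subr0); have := p_ge0 (- v0); split; lra.
have [t [Lt [_ t1t] t_total]] :=
  total_dominated_extension (extend_dominated Lt0 Dv0 c_adm).
exists (pval t); split.
- by move=> a x y; case: Lt => _ _ L _; apply: L; apply: t_total.
- by move=> x; exact: dominated_le.
- have Dv0' : extend_dom t0 v0 v0 by exists 0, 1; rewrite scale1r add0r.
  rewrite t1t //=.
  by have := extend_valE Lt0 Dv0 1 1 (erefl : pdom t0 0); rewrite scale1r !add0r mulr1.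
Qed.

End HahnBanach.

Section Separation.
Context {R : realType} {V : lmodType R} (N : V -> R).
Hypothesis N_ge0 : forall x, 0 <= N x.
Hypothesis N_subadd : forall x y, N (x + y) <= N x + N y.
Hypothesis N_scale : forall (a : R) x, N (a *: x) = `|a| * N x.
Variables (C : set V) (a b : V) (r : R).
Hypothesis C_convex : forall c1 c2 (t : R), 0 <= t -> t <= 1 -> C c1 -> C c2 ->
  C (t *: c1 + (1 - t) *: c2).
Hypothesis r_gt0 : 0 < r.
Hypothesis Ca : C a.
Hypothesis b_far : forall c, C c -> r <= N (b - c).

(* A substitute for the Minkowski gauge of (C - a) + r * {N < 1}: it is
   sublinear, below N / r and 1 on C - a, but at least 1 at b - a. *)
Definition sep_values (x : V) :=
  [set v | exists l c, [/\ 0 <= l, C c & v = l + N (x - l *: (c - a)) / r]].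

Definition sep_gauge x := inf (sep_values x).

Lemma seminorm0 : N 0 = 0.
Proof. by have := N_scale 0 0; rewrite scaler0 normr0 mul0r. Qed.

Lemma sep_values_ge0 x v : sep_values x v -> 0 <= v.
Proof.
by move=> [l [c [l0 _ ->]]]; rewrite addr_ge0 // divr_ge0 // ltW.
Qed.

Lemma sep_values_neq0 x : sep_values x !=set0.
Proof. by exists (0 + N (x - 0 *: (a - a)) / r), 0, a. Qed.

Lemma sep_gauge_le x v : sep_values x v -> sep_gauge x <= v.
Proof. by apply: ge_inf; exists 0 => w /sep_values_ge0. Qed.

Lemma sep_gauge_ge0 x : 0 <= sep_gauge x.
Proof. by apply: lb_le_inf; [exact: sep_values_neq0 | move=> v /sep_values_ge0]. Qed.

Lemma sep_gauge_le_seminorm x : sep_gauge x <= N x / r.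
Proof.
by apply: sep_gauge_le; exists 0, a; rewrite scale0r subr0 add0r.
Qed.

Lemma sep_gauge_le1 c : C c -> sep_gauge (c - a) <= 1.
Proof.
by move=> Cc; apply: sep_gauge_le; exists 1, c; rewrite scale1r subrr seminorm0 mul0r addr0.
Qed.

Lemma sep_values_cone l1 l2 c1 c2 : 0 <= l1 -> 0 <= l2 -> C c1 -> C c2 ->
  exists2 c, C c & (l1 + l2) *: (c - a) = l1 *: (c1 - a) + l2 *: (c2 - a).
Proof.
move=> l1_ge0 l2_ge0 Cc1 Cc2.
have [l0|l_neq0] := eqVneq (l1 + l2) 0.
  have [-> ->] : l1 = 0 /\ l2 = 0 by split; lra.
  by exists a => //; rewrite addr0 !scale0r addr0.
have l_gt0 : 0 < l1 + l2 by rewrite lt_neqAle eq_sym l_neq0 addr_ge0.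
pose t := l1 / (l1 + l2).
have lt : (l1 + l2) * t = l1 by rewrite mulrCA divff ?mulr1.
exists (t *: c1 + (1 - t) *: c2).
  by apply: C_convex; rewrite ?divr_ge0 ?ler_pdivrMr ?mul1r ?lerDl // ltW.
rewrite !scalerBr scalerDr !scalerA lt mulrBr mulr1 lt.
have -> : l1 + l2 - l1 = l2 by rewrite addrC addKr.
by rewrite scalerDl opprD addrA -addrA addrACA.
Qed.

Lemma sep_gauge_subadd x y : sep_gauge (x + y) <= sep_gauge x + sep_gauge y.
Proof.
have sum_le v1 v2 : sep_values x v1 -> sep_values y v2 -> sep_gauge (x + y) <= v1 + v2.
  move=> [l1 [c1 [l1_ge0 Cc1 ->]]] [l2 [c2 [l2_ge0 Cc2 ->]]].
  have [c Cc cE] := sep_values_cone l1_ge0 l2_ge0 Cc1 Cc2.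
  apply: (@le_trans _ _ ((l1 + l2) + N (x + y - (l1 + l2) *: (c - a)) / r)).
    by apply: sep_gauge_le; exists (l1 + l2), c; rewrite addr_ge0.
  rewrite cE opprD addrACA.
  have r_inv : 0 <= r^-1 by rewrite invr_ge0 ltW.
  have := ler_wpM2r r_inv (N_subadd (x - l1 *: (c1 - a)) (y - l2 *: (c2 - a))).
  rewrite mulrDl; lra.
have le_x v2 : sep_values y v2 -> sep_gauge (x + y) - v2 <= sep_gauge x.
  move=> Sv2; apply: lb_le_inf; first exact: sep_values_neq0.
  by move=> v1 /sum_le /(_ Sv2); lra.
have : sep_gauge (x + y) - sep_gauge x <= sep_gauge y.
  apply: lb_le_inf; first exact: sep_values_neq0.
  by move=> v2 /le_x; lra.
lra.
Qed.

Lemma sep_gauge_posZ_le (m : R) x : 0 < m -> sep_gauge (m *: x) <= m * sep_gauge x.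
Proof.
move=> m_gt0; rewrite mulrC -ler_pdivrMr //.
apply: lb_le_inf; first exact: sep_values_neq0.
move=> _ [l [c [l_ge0 Cc ->]]]; rewrite ler_pdivrMr //.
apply: (@le_trans _ _ (m * l + N (m *: x - (m * l) *: (c - a)) / r)).
  by apply: sep_gauge_le; exists (m * l), c; rewrite mulr_ge0 // ltW.
rewrite -scalerA -scalerBr N_scale gtr0_norm // mulrDl [l * m]mulrC.
by rewrite -mulrA [N _ / r * m]mulrC.
Qed.

Lemma sep_gauge_posZ (m : R) x : 0 < m -> sep_gauge (m *: x) = m * sep_gauge x.
Proof.
move=> m_gt0; apply/eqP; rewrite eq_le sep_gauge_posZ_le //=.
have := @sep_gauge_posZ_le m^-1 (m *: x); rewrite invr_gt0 => /(_ m_gt0).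
rewrite scalerA mulVf ?gt_eqF // scale1r => /(ler_wpM2l (ltW m_gt0)).
by rewrite mulrA divff ?gt_eqF // mul1r.
Qed.

Lemma sep_gauge_ge1 : 1 <= sep_gauge (b - a).
Proof.
apply: lb_le_inf; first exact: sep_values_neq0.
move=> _ [l [c [l_ge0 Cc ->]]].
have [l_le1|l_gt1] := leP l 1; last first.
  by have := divr_ge0 (N_ge0 (b - a - l *: (c - a))) (ltW r_gt0); lra.
have := b_far (C_convex l_ge0 l_le1 Cc Ca).
have -> : b - (l *: c + (1 - l) *: a) = b - a - l *: (c - a).
  by rewrite scalerBl scale1r scalerBr addrCA opprD addrA opprB.
move=> far; have : 1 <= N (b - a - l *: (c - a)) / r by rewrite ler_pdivlMr // mul1r.
lra.
Qed.

Theorem seminorm_separation : exists F : V -> R,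
  [/\ scalar F, forall x, F x <= N x / r,
      forall c, C c -> F (c - a) <= 1 & F (b - a) = 1].
Proof.
have [F [LF F_le Fba]] := hahn_banach_scalar sep_gauge_subadd sep_gauge_posZ
  sep_gauge_ge0 sep_gauge_ge1.
exists F; split=> // [x|c Cc].
  exact: le_trans (F_le x) (sep_gauge_le_seminorm x).
exact: le_trans (F_le _) (sep_gauge_le1 Cc).
Qed.

End Separation.

Definition ord_cat (A : Type) n1 n2 (f : 'I_n1 -> A) (g : 'I_n2 -> A) : 'I_(n1 + n2) -> A :=
  fun i => match fintype.split i with inl j => f j | inr k => g k end.

Lemma ord_cat_l A n1 n2 f g (j : 'I_n1) : @ord_cat A n1 n2 f g (lshift n2 j) = f j.
Proof. by rewrite /ord_cat (unsplitK (inl _)). Qed.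

Lemma ord_cat_r A n1 n2 f g (k : 'I_n2) : @ord_cat A n1 n2 f g (rshift n1 k) = g k.
Proof. by rewrite /ord_cat (unsplitK (inr _)). Qed.

Lemma ord_catP A (P : A -> Prop) n1 n2 (f : 'I_n1 -> A) (g : 'I_n2 -> A) :
  (forall j, P (f j)) -> (forall k, P (g k)) -> forall i, P (ord_cat f g i).
Proof. by move=> Pf Pg i; rewrite /ord_cat; case: fintype.split. Qed.

Section ConvexCombination.
Context {R : realType} {V : lmodType R}.

Definition conv_comb (A : set V) : set V :=
  [set z | exists (n : nat) (w : 'I_n -> R) (x : 'I_n -> V),
     [/\ forall i, 0 <= w i, \sum_(i < n) w i = 1, forall i, A (x i)
       & z = \sum_(i < n) w i *: x i]].

Lemma conv_comb_mem (A : set V) x : A x -> conv_comb A x.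
Proof.
by exists 1%N, (fun=> 1), (fun=> x); rewrite !big_ord1 scale1r.
Qed.

Lemma conv_comb_convex (A : set V) z1 z2 (t : R) : 0 <= t -> t <= 1 ->
  conv_comb A z1 -> conv_comb A z2 -> conv_comb A (t *: z1 + (1 - t) *: z2).
Proof.
move=> t_ge0 t_le1 [n1 [w1 [x1 [w1_ge0 w1_sum Ax1 ->]]]].
move=> [n2 [w2 [x2 [w2_ge0 w2_sum Ax2 ->]]]].
exists (n1 + n2)%N, (ord_cat (fun j => t * w1 j) (fun k => (1 - t) * w2 k)), (ord_cat x1 x2).
split; first by apply: (ord_catP (P := fun v => 0 <= v)) => i; rewrite mulr_ge0 // subr_ge0.
- rewrite big_split_ord /=.
  under eq_bigr do rewrite ord_cat_l.
  under [X in _ + X]eq_bigr do rewrite ord_cat_r.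
  by rewrite -!mulr_sumr w1_sum w2_sum !mulr1 addrC subrK.
- exact: (ord_catP (P := A)).
- rewrite big_split_ord /= !scaler_sumr.
  by congr (_ + _); apply: eq_bigr => j _; rewrite ?ord_cat_l ?ord_cat_r scalerA.
Qed.

End ConvexCombination.

Lemma conv_dualE {R : realType} {X : normedModType R} (A : set (X -> R)) :
  conv_dual A = conv_comb A.
Proof.
apply/seteqP; split=> g [n [w [f [w_ge0 w_sum Af ->]]]]; exists n, w, f; split=> //.
  by rewrite fct_sumE.
by rewrite fct_sumE.
Qed.

Section MaximalMonotone.
Context {R : realType} {X : normedModType R}.

Lemma dual_elt0 : dual_elt (fun _ : X => 0 : R).
Proof. by split=> [a x y|x]; [rewrite mulr0 addr0 | exact: cst_continuous]. Qed.

Lemma dual_elt_addZ (g u : X -> R) (l : R) : dual_elt g -> dual_elt u ->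
  dual_elt (fun w => g w + l * u w).
Proof.
move=> [Lg g_cont] [Lu u_cont]; split=> [a x y|x]; first by rewrite Lg Lu; ring.
exact: (continuousD (g_cont x) (continuousM (@cst_continuous _ _ l x) (u_cont x))).
Qed.

Variable T : set (X * (X -> R)).
Hypothesis T_maxmono : maximal_monotone T.

Lemma maximal_monotone_neq0 : T !=set0.
Proof.
apply: contrapT => T0; pose S : set (X * (X -> R)) := [set (0, fun=> 0)].
have opS : is_operator S by move=> q ->; exact: dual_elt0.
have monS : monotone_op S by move=> q q' -> ->; rewrite /= subrr.
have T_sub : T `<=` S by move=> q Tq; case: T0; exists q.
case: T_maxmono => _ _ /(_ S opS monS T_sub) TS.
by apply: T0; exists (0, fun=> 0); rewrite -TS.
Qed.

Lemma maximal_monotone_related P : dual_elt P.2 ->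
  (forall x f, T (x, f) -> 0 <= f (x - P.1) - P.2 (x - P.1)) -> T P.
Proof.
case: T_maxmono => opT monT T_max dP related; have [LP _] := dP.
have opS : is_operator (T `|` [set P]) by move=> q [/opT|->].
have monS : monotone_op (T `|` [set P]).
  move=> [x f] [y g] [Txf|->] [Tyg|->] /=; first exact: monT Txf Tyg.
  - exact: related Txf.
  - have [Lg _] : dual_elt g := opT _ Tyg; have := related _ _ Tyg.
    by rewrite !(scalar_funB LP, scalar_funB Lg); lra.
  - by rewrite !subrr.
by rewrite -(T_max _ opS monS (fun q Tq => or_introl Tq)); right.
Qed.

Lemma dom_ran_bounded_le0 (u : X -> R) (z : X) (M s : R) : dual_elt u ->
  (forall x, dom_op T x -> u x <= M) -> (forall f, ran_op T f -> f z <= s) ->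
  u z <= 0.
Proof.
move=> du u_ub f_ub; have [[x0 g0] T0] := maximal_monotone_neq0.
have [opT monT _] := T_maxmono; have dg0 : dual_elt g0 := opT _ T0.
have [Lg _] := dg0; have [Lu _] := du.
rewrite leNgt; apply/negP => uz_gt0.
pose K := `|s| + `|g0 z| + `|M| + `|u x0|.
have K_ge0 : 0 <= K by rewrite !addr_ge0.
pose l := (K + 1) / u z.
have l_gt0 : 0 < l by rewrite divr_gt0 // ltr_wpDl.
have luz : l * u z = K + 1 by rewrite mulrAC -mulrA divff ?gt_eqF // mulr1.
have bounds : s - g0 z + M - u x0 <= K.
  by have := ler_norm s; have := ler_norm M; have := ler_norm (- g0 z);
     have := ler_norm (- u x0); rewrite !normrN /K; lra.
have TP : T (x0 + l *: z, fun w => g0 w + l * u w).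
  apply: maximal_monotone_related => [|x f Txf]; first exact: dual_elt_addZ.
  have [Lf _] : dual_elt f := opT _ Txf.
  have := monT _ _ Txf T0; have := f_ub f (ex_intro _ x Txf).
  have := u_ub x (ex_intro _ f Txf).
  rewrite /= opprD addrA !(scalar_funB Lf, scalar_funB Lg, scalar_funB Lu).
  rewrite !(scalar_funZ Lf, scalar_funZ Lg, scalar_funZ Lu).
  move=> ux fz mon.
  have : 0 <= l * ((M - u x) + (s - f z) + (K - (s - g0 z + M - u x0))).
    by apply: mulr_ge0; [exact: ltW | lra].
  have : l * (l * u z) = l * (K + 1) by rewrite luz.
  lra.
have := u_ub _ (ex_intro _ _ TP).
rewrite /= scalar_funD // scalar_funZ // luz.
have := normr_ge0 s; have := normr_ge0 (g0 z).
by have := ler_norm M; have := ler_norm (- u x0); rewrite normrN /K; lra.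
Qed.

End MaximalMonotone.

Lemma scalar_continuous {R : realType} {X : normedModType R} (F : X -> R) (k : R) :
  scalar F -> (forall x, F x <= k * `|x|) -> continuous F.
Proof.
move=> LF F_le.
pose lf : {linear X -> R^o} := HB.pack F (GRing.isLinear.Build _ _ _ _ F LF).
apply: (@bounded_linear_continuous _ _ _ lf); apply/linear_boundedP.
near=> r => x; have := F_le x; have := F_le (- x).
rewrite scalar_funN // normrN.
have : k <= r by near: r; apply: nbhs_pinfty_ge; exact: num_real.
move=> kr Fnx Fx; have := ler_wpM2r (normr_ge0 x) kr.
by rewrite /lf /= ler_norml; move=> kxr; apply/andP; split; lra.
Unshelve. all: by end_near.
Qed.

Lemma ereal_sup_lt_pinfty_ub {R : realType} (I : Type) (A : set I) (g : I -> R) :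
  (ereal_sup [set (g i)%:E | i in A] < +oo)%E -> exists M, forall i, A i -> g i <= M.
Proof.
have g_le i : A i -> ((g i)%:E <= ereal_sup [set (g i)%:E | i in A])%E.
  by move=> Ai; apply: ereal_sup_ubound; exists i.
case: ereal_sup g_le => [M| |] // g_le _; first by exists M => i /g_le; rewrite lee_fin.
by exists 0 => i /g_le.
Qed.

Lemma coord_le_mx_norm {R : realType} n (v : 'rV[R]_n) i : `|v 0 i| <= `|v|.
Proof.
by rewrite [leRHS]mx_normrE; exact: (le_bigmax _ (fun ij => `|v ij.1 ij.2|) (0, i)).
Qed.

Section RecessionCones.
Context {R : realType} {X : normedModType R} (T : set (X * (X -> R))).
Hypothesis T_maxmono : maximal_monotone T.

Lemma conv_hull_dom_shift (u : X) (s : R) (h : X) (l e : R) :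
  (forall f, ran_op T f -> f u <= s) -> conv_hull (dom_op T) h -> 0 <= l -> 0 < e ->
  exists2 c, conv_hull (dom_op T) c & `|h + l *: u - c| < e.
Proof.
move=> f_ub Ch l_ge0 e_gt0; apply: contrapT => no_near.
have far c : conv_hull (dom_op T) c -> e <= `|h + l *: u - c|.
  by move=> Cc; rewrite leNgt; apply/negP => near_c; apply: no_near; exists c.
have [F [LF F_le F_C F1]] := seminorm_separation (@normr_ge0 _ _) (@ler_normD _ _)
  (@normrZ _ _) (@conv_comb_convex _ _ _) e_gt0 Ch far.
have dF : dual_elt F.
  split=> //; apply: (scalar_continuous (k := e^-1) LF) => x; rewrite mulrC; exact: F_le.
have Fu_le0 : F u <= 0.
  apply: (dom_ran_bounded_le0 T_maxmono dF (M := 1 + F h)) f_ub => x Dx.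
  by have := F_C _ (conv_comb_mem Dx); rewrite scalar_funB //; lra.
rewrite addrC addKr scalar_funZ // in F1.
by have := mulr_ge0_le0 l_ge0 Fu_le0; lra.
Qed.

Lemma dom_recession (u : X) : (supp_ran T u < +oo)%E ->
  rec_cone (norm_closure (conv_hull (dom_op T))) u.
Proof.
move=> /ereal_sup_lt_pinfty_ub [s f_ub] x cl_x l l_ge0 B /nbhs_ballP [e e_gt0 e_B].
have e2_gt0 : 0 < e / 2 by rewrite divr_gt0.
have [h [Ch]] := cl_x _ (nbhsx_ballx x _ e2_gt0).
rewrite -ball_normE /ball_ /= => xh_lt.
have [c Cc hc_lt] := conv_hull_dom_shift f_ub Ch l_ge0 e2_gt0.
exists c; split => //; apply: e_B; rewrite -ball_normE /ball_ /=.
have -> : x + l *: u - c = (x - h) + (h + l *: u - c) by rewrite !addrA subrK.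
by apply: le_lt_trans (ler_normD _ _) _; lra.
Qed.

Definition evals n (xs : 'I_n -> X) (g : X -> R) : 'rV[R]_n := \row_i g (xs i).

Lemma scalar_evals n (xs : 'I_n -> X) (F : 'rV[R]_n -> R) (g : X -> R) :
  scalar F -> scalar g -> g (\sum_(i < n) F (delta_mx 0 i) *: xs i) = F (evals xs g).
Proof.
move=> LF Lg; rewrite scalar_fun_sum // [evals xs g]row_sum_delta scalar_fun_sum //.
by apply: eq_bigr => i _; rewrite mxE mulrC.
Qed.

Lemma conv_dual_ran_shift n (xs : 'I_n -> X) (u : X -> R) (M : R) (h : X -> R) (l e : R) :
  dual_elt u -> (forall x, dom_op T x -> u x <= M) ->
  conv_dual (ran_op T) h -> 0 <= l -> 0 < e ->
  exists2 g, conv_dual (ran_op T) g &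
    forall i, `|g (xs i) - (h (xs i) + l * u (xs i))| < e.
Proof.
move=> du u_ub Ch l_ge0 e_gt0; apply: contrapT => no_near.
pose C := [set v | exists2 g, conv_dual (ran_op T) g & v = evals xs g].
have far v : C v -> e <= `|evals xs h + l *: evals xs u - v|.
  move=> [g Cg ->]; apply: contrapT => /negP; rewrite -ltNge => near_g.
  apply: no_near; exists g => // i; rewrite distrC.
  by apply: le_lt_trans near_g; apply: le_trans (coord_le_mx_norm _ i); rewrite !mxE.
have C_convex v1 v2 (t : R) : 0 <= t -> t <= 1 -> C v1 -> C v2 ->
    C (t *: v1 + (1 - t) *: v2).
  move=> t_ge0 t_le1 [g1 Cg1 ->] [g2 Cg2 ->]; rewrite conv_dualE in Cg1 Cg2.
  exists (t *: g1 + (1 - t) *: g2); first by rewrite conv_dualE; exact: conv_comb_convex.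
  by apply/rowP => i; rewrite !mxE.
have [F [LF _ F_C F1]] := seminorm_separation (@normr_ge0 _ _) (@ler_normD _ _)
  (@normrZ _ _) C_convex e_gt0 (ex_intro2 _ _ h Ch erefl) far.
pose z := \sum_(i < n) F (delta_mx 0 i) *: xs i.
have [opT _ _] := T_maxmono; have [Lu _] := du.
have f_ub f : ran_op T f -> f z <= 1 + F (evals xs h).
  move=> [x Txf]; have [Lf _] : dual_elt f := opT _ Txf.
  have Cf : C (evals xs f).
    by exists f => //; rewrite conv_dualE; apply: conv_comb_mem; exists x.
  by have := F_C _ Cf; rewrite /z scalar_evals // scalar_funB //; lra.
have Fu_le0 : F (evals xs u) <= 0.
  by rewrite -scalar_evals // -/z; exact: (dom_ran_bounded_le0 T_maxmono du u_ub f_ub).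
rewrite addrC addKr scalar_funZ // in F1.
by have := mulr_ge0_le0 l_ge0 Fu_le0; lra.
Qed.

Lemma ran_recession (u : X -> R) : dual_elt u -> (supp_dom T u < +oo)%E ->
  rec_cone_dual (wstar_closure (conv_dual (ran_op T))) u.
Proof.
move=> du /ereal_sup_lt_pinfty_ub [M u_ub] x [dx cl_x] l l_ge0.
split=> [|n xs e e_gt0]; first exact: dual_elt_addZ.
have e2_gt0 : 0 < e / 2 by rewrite divr_gt0.
have [h [Ch xh_lt]] := cl_x n xs _ e2_gt0.
have [g Cg hg_lt] := conv_dual_ran_shift xs du u_ub Ch l_ge0 e2_gt0.
exists g; split => // i.
have -> : g (xs i) - (x (xs i) + l * u (xs i)) =
  (g (xs i) - (h (xs i) + l * u (xs i))) + (h (xs i) - x (xs i)) by ring.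
by apply: le_lt_trans (ler_normD _ _) _; have := hg_lt i; have := xh_lt i; lra.
Qed.

End RecessionCones.

Theorem lemma4p2 (R : realType) (X : completeNormedModType R)
    (T : set (X * (X -> R))) :
  maximal_monotone T ->
  ([set u | dual_elt u /\ (supp_dom T u < +oo)%E]
     `<=` rec_cone_dual (wstar_closure (conv_dual (ran_op T)))) /\
  ([set u : X | (supp_ran T u < +oo)%E]
     `<=` rec_cone (norm_closure (conv_hull (dom_op T)))).
Proof.
move=> T_maxmono; split=> [u [du su]|u su].
  exact: ran_recession.
exact: dom_recession.
Qed.
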